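(* Let $(X,d)$ be a metric space and $f:\ell_\infty(X)\to X$. Then: (i) $f$ has a generalized contractive fixed point if and only if $\tilde f$ has a contractive fixed point with respect to the Tychonoff topology on $\ell_\infty(X)$; (ii) if $\mathbf{x}_*$ is a contractive fixed point of $\tilde f$ with respect to the Tychonoff topology, then $\mathbf{x}_*=(x_*,x_*,\dots)$, where $x_*$ is a generalized contractive fixed point of $f$.
   Context: $\mathbb{N}^*=\{0,1,2,\dots\}$; $\ell_\infty(X)$ is the set of all bounded sequences $(x_n)_{n\in\mathbb{N}^*}$ in $X$, and the Tychonoff topology on it is the subspace topology from $\prod_{n\in\mathbb{N}^*}X$. For $f:\ell_\infty(X)\to X$ define $\tilde f:\ell_\infty(X)\to\ell_\infty(X)$ by $\tilde f((x_n))=(f((x_n)),x_0,x_1,\dots)$. For $x\in\ell_\infty(X)$ put $\tilde{x}^0:=x$ and, for $k\ge1$, $x^k:=f(\tilde{x}^{k-1})$, $\tilde{x}^k:=\tilde f(\tilde{x}^{k-1})$; $(x^k)$ is the sequence of generalized iterates of $f$ at $x$. A point $x_*\in X$ is a generalized fixed point of $f$ if $f(x_*,x_*,\dots)=x_*$; it is a generalized contractive fixed point (GCFP) if moreover for every $x\in\ell_\infty(X)$ the sequence of generalized iterates of $f$ at $x$ converges to $x_*$. For a selfmap $g$ of a topological space $Y$, a fixed point $y_*$ of $g$ is a contractive fixed point (CFP) if $g^k(y)\to y_*$ for every $y\in Y$. *)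

From Stdlib Require Import Reals Lra.
Open Scope R_scope.

Definition is_metric {X : Type} (d : X -> X -> R) : Prop :=
  (forall x y, 0 <= d x y) /\
  (forall x y, d x y = 0 <-> x = y) /\
  (forall x y, d x y = d y x) /\
  (forall x y z, d x z <= d x y + d y z).

Definition bounded_seq {X : Type} (d : X -> X -> R) (x : nat -> X) : Prop :=
  exists M, forall n m, d (x n) (x m) <= M.

Definition linf {X : Type} (d : X -> X -> R) : Type := { x : nat -> X | bounded_seq d x }.

Definition shift_in {X : Type} (a : X) (x : nat -> X) : nat -> X :=
  fun n => match n with O => a | S k => x k end.

Lemma shift_in_bounded {X : Type} (d : X -> X -> R) (Hd : is_metric d)
  (a : X) (x : nat -> X) : bounded_seq d x -> bounded_seq d (shift_in a x).
Proof.
  destruct Hd as [Hnn [H0 [Hs Ht]]].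
  intros [M HM]. exists (M + d a (x O)).
  assert (HM0 : 0 <= M) by (specialize (HM O O); specialize (Hnn (x O) (x O)); lra).
  assert (Hc : 0 <= d a (x O)) by apply Hnn.
  assert (Haa : d a a = 0) by (apply H0; reflexivity).
  intros [|n] [|m]; simpl.
  - lra.
  - specialize (Ht a (x O) (x m)). specialize (HM O m). lra.
  - specialize (Ht (x n) (x O) a). specialize (HM n O). rewrite (Hs (x O) a) in Ht. lra.
  - specialize (HM n m). lra.
Qed.

Definition ftilde {X : Type} (d : X -> X -> R) (Hd : is_metric d)
  (f : linf d -> X) (x : linf d) : linf d :=
  exist _ (shift_in (f x) (proj1_sig x))
        (shift_in_bounded d Hd (f x) (proj1_sig x) (proj2_sig x)).

Lemma const_bounded {X : Type} (d : X -> X -> R) (Hd : is_metric d) (a : X) :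
  bounded_seq d (fun _ => a).
Proof. exists (d a a). intros; lra. Qed.

Definition const_seq {X : Type} (d : X -> X -> R) (Hd : is_metric d) (a : X) : linf d :=
  exist _ (fun _ => a) (const_bounded d Hd a).

Definition cv_metric {X : Type} (d : X -> X -> R) (u : nat -> X) (l : X) : Prop :=
  forall eps, eps > 0 -> exists K, forall k, (k >= K)%nat -> d (u k) l < eps.

(* Convergence in the Tychonoff (product) topology on l_inf(X), i.e. the subspace
   topology of prod_n X, expressed through its standard base of cylinders
   { y | forall n < N, d (y n) (l n) < eps }. *)
Definition cv_tych {X : Type} (d : X -> X -> R) (s : nat -> linf d) (l : linf d) : Prop :=
  forall (N : nat) (eps : R), eps > 0 ->
    exists K, forall k, (k >= K)%nat ->
      forall n, (n < N)%nat -> d (proj1_sig (s k) n) (proj1_sig l n) < eps.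

(* Generalized iterates: x^k = f(tilde x^{k-1}), tilde x^k = ftilde^k(x).
   giter k = x^{k+1} = f (ftilde^k x), k >= 0 (so the sequence (x^k)_{k>=1}). *)
Definition giter {X : Type} (d : X -> X -> R) (Hd : is_metric d)
  (f : linf d -> X) (x : linf d) (k : nat) : X :=
  f (Nat.iter k (ftilde d Hd f) x).

Definition is_GCFP {X : Type} (d : X -> X -> R) (Hd : is_metric d)
  (f : linf d -> X) (xs : X) : Prop :=
  f (const_seq d Hd xs) = xs /\
  forall x : linf d, cv_metric d (giter d Hd f x) xs.

Definition is_CFP_tych {X : Type} (d : X -> X -> R)
  (g : linf d -> linf d) (ys : linf d) : Prop :=
  g ys = ys /\ forall y : linf d, cv_tych d (fun k => Nat.iter k g y) ys.

From Stdlib Require Import Reals Lia ProofIrrelevance FunctionalExtensionality.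
Open Scope R_scope.

(* The n-th coordinate of the k-th iterate of [ftilde] is, for k > n, the
   generalized iterate x^(k-n); so Tychonoff convergence of the iterates of
   [ftilde] to the constant sequence at x_* is exactly convergence of the
   generalized iterates to x_*.  Conversely, a fixed point of [ftilde] is
   invariant under the right shift, hence constant, and its value x_* satisfies
   f(x_*, x_*, ...) = x_*; reading the 0-th coordinate of the iterates gives the
   convergence of the generalized iterates. *)

Lemma linf_ext {X : Type} (d : X -> X -> R) (a b : linf d) :
  proj1_sig a = proj1_sig b -> a = b.
Proof.
  destruct a as [a pa], b as [b pb]; simpl; intros ->.
  f_equal; apply proof_irrelevance.
Qed.

Lemma cv_metric_shift {X : Type} (d : X -> X -> R) (u v : nat -> X) (m : nat) (l : X) :
  (forall j, u (S m + j)%nat = v j) -> cv_metric d v l -> cv_metric d u l.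
Proof.
  intros Huv Hv eps Heps.
  destruct (Hv eps Heps) as [K HK].
  exists (S m + K)%nat; intros k Hk.
  replace k with (S m + (k - S m))%nat by lia.
  rewrite Huv; apply HK; lia.
Qed.

Lemma cv_tych_coordinatewise {X : Type} (d : X -> X -> R)
  (s : nat -> linf d) (l : linf d) :
  (forall n, cv_metric d (fun k => proj1_sig (s k) n) (proj1_sig l n)) ->
  cv_tych d s l.
Proof.
  intros Hcv N eps Heps.
  induction N as [|N [K1 HK1]].
  - exists O; intros; lia.
  - destruct (Hcv N eps Heps) as [K2 HK2].
    exists (Nat.max K1 K2); intros k Hk n Hn.
    destruct (Nat.lt_ge_cases n N) as [HnN|HnN].
    + apply HK1; lia.
    + replace n with N by lia; apply HK2; lia.
Qed.

Section Ftilde.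

Variables (X : Type) (d : X -> X -> R) (Hd : is_metric d) (f : linf d -> X).

Lemma ftilde_iter_coord (x : linf d) (n j : nat) :
  proj1_sig (Nat.iter (S n + j) (ftilde d Hd f) x) n = giter d Hd f x j.
Proof.
  induction n as [|n IHn]; [reflexivity | exact IHn].
Qed.

Lemma ftilde_const (xs : X) :
  f (const_seq d Hd xs) = xs -> ftilde d Hd f (const_seq d Hd xs) = const_seq d Hd xs.
Proof.
  intros Hf; apply linf_ext, functional_extensionality.
  intros [|n]; [exact Hf | reflexivity].
Qed.

Lemma ftilde_fixed_const (ys : linf d) :
  ftilde d Hd f ys = ys -> proj1_sig ys = (fun _ => proj1_sig ys O).
Proof.
  intros Hfix.
  assert (Hshift : forall n, proj1_sig ys (S n) = proj1_sig ys n).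
  { intros n; rewrite <- Hfix at 1; reflexivity. }
  apply functional_extensionality; intros n.
  induction n as [|n IHn]; [reflexivity | now rewrite Hshift].
Qed.

Lemma GCFP_CFP_tych (xs : X) :
  is_GCFP d Hd f xs -> is_CFP_tych d (ftilde d Hd f) (const_seq d Hd xs).
Proof.
  intros [Hf Hcv]; split; [now apply ftilde_const |].
  intros x; apply cv_tych_coordinatewise; intros n.
  apply (cv_metric_shift d _ (giter d Hd f x) n); [|apply Hcv].
  apply ftilde_iter_coord.
Qed.

Lemma CFP_tych_GCFP (ys : linf d) :
  is_CFP_tych d (ftilde d Hd f) ys ->
  proj1_sig ys = (fun _ => proj1_sig ys O) /\ is_GCFP d Hd f (proj1_sig ys O).
Proof.
  intros [Hfix Hcv].
  pose proof (ftilde_fixed_const ys Hfix) as Hconst.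
  split; [exact Hconst | split].
  - assert (Hys : const_seq d Hd (proj1_sig ys O) = ys)
      by (apply linf_ext; symmetry; exact Hconst).
    rewrite Hys.
    change (f ys) with (proj1_sig (ftilde d Hd f ys) O).
    now rewrite Hfix.
  - intros x eps Heps.
    destruct (Hcv x 1%nat eps Heps) as [K HK].
    exists K; intros k Hk.
    exact (HK (S k) ltac:(lia) O ltac:(lia)).
Qed.

End Ftilde.

Theorem mainTheorem8 (X : Type) (d : X -> X -> R) (Hd : is_metric d)
  (f : linf d -> X) :
  ((exists xs : X, is_GCFP d Hd f xs) <->
   (exists ys : linf d, is_CFP_tych d (ftilde d Hd f) ys)) /\
  (forall ys : linf d, is_CFP_tych d (ftilde d Hd f) ys ->
     exists xs : X, proj1_sig ys = (fun _ => xs) /\ is_GCFP d Hd f xs).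
Proof.
  split; [split|].
  - intros [xs Hxs]; exists (const_seq d Hd xs); now apply GCFP_CFP_tych.
  - intros [ys Hys]; exists (proj1_sig ys O); apply (CFP_tych_GCFP X d Hd f ys Hys).
  - intros ys Hys; exists (proj1_sig ys O); exact (CFP_tych_GCFP X d Hd f ys Hys).
Qed.
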